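(* For any graph $G$ with no isolated vertex, order $n$ and maximum degree $\Delta$, $$\left\lceil\frac{2n}{\Delta+1}\right\rceil\le\gamma_{(2,2,0)}(G)\le2\gamma(G).$$ Furthermore, if $G$ has minimum degree $\delta\ge2$, then $\gamma_{(2,2,0)}(G)\le\gamma_{\times2,t}(G)$.
   Context: All graphs are finite and simple; $N(v)$ is the open neighbourhood. $\gamma_{(2,2,0)}(G)$ is the minimum of $\sum_v f(v)$ over functions $f:V(G)\to\{0,1,2\}$ such that $\sum_{u\in N(v)}f(u)\ge2$ for every $v$ with $f(v)\in\{0,1\}$ (no condition on vertices with $f(v)=2$). $\gamma(G)$ is the domination number and $\gamma_{\times2,t}(G)$ is the minimum size of $S\subseteq V(G)$ such that every vertex has at least two neighbours in $S$. *)

From mathcomp Require Import all_boot all_order.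
Set Implicit Arguments.
Unset Strict Implicit.
Unset Printing Implicit Defensive.

Section Graph.
Variables (T : finType) (e : rel T).

Definition simple_graph := symmetric e /\ irreflexive e.

Definition N (v : T) : {set T} := [set u | e v u].
Definition deg (v : T) : nat := #|N v|.

Definition no_isolated := forall v : T, exists u : T, e v u.

(* maximum and minimum degree (min degree of the empty graph defaults to 0) *)
Definition maxdeg : nat := \max_(v : T) deg v.
Definition mindeg : nat := \big[minn/#|T|]_(v : T) deg v.

Definition weight (f : {ffun T -> 'I_3}) : nat := \sum_(v : T) (f v : nat).
Definition is220 (f : {ffun T -> 'I_3}) : bool :=
  [forall v, ((f v : nat) <= 1) ==> (2 <= \sum_(u in N v) (f u : nat))].
(* the constant-2 function is always admissible, so the minimum is attained;
   the default value 2|V| is an upper bound *)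
Definition gamma220 : nat :=
  \big[minn/(#|T|).*2]_(f : {ffun T -> 'I_3} | is220 f) weight f.

Definition dominating (S : {set T}) : bool :=
  [forall v, (v \in S) || [exists u in S, e v u]].
Definition gamma : nat := \big[minn/#|T|]_(S : {set T} | dominating S) #|S|.

Definition double_total_dominating (S : {set T}) : bool :=
  [forall v, 2 <= #|N v :&: S|].
Definition gamma_x2t : nat :=
  \big[minn/#|T|]_(S : {set T} | double_total_dominating S) #|S|.

End Graph.

Definition ceil_div (a b : nat) : nat := (a + b.-1) %/ b.

(** A (2,2,0)-function of weight w puts, on every closed neighbourhood N[v],
    total weight at least 2; summing over v counts f(u) exactly deg(u) + 1
    <= Delta + 1 times, whence 2n <= (Delta + 1) w.  For the upper bounds,
    placing 2 on a dominating set, or 1 on a double total dominating set,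
    gives a (2,2,0)-function of weight 2|S|, resp. |S|. *)
From mathcomp Require Import all_boot all_order.
From mathcomp Require Import zify.
Set Implicit Arguments.
Unset Strict Implicit.
Unset Printing Implicit Defensive.

Lemma bigminn_le (I : finType) (P : pred I) (F : I -> nat) x0 j :
  P j -> \big[minn/x0]_(i | P i) F i <= F j.
Proof.
move=> Pj; elim: (index_enum I) (mem_index_enum j) => // i r IHr.
rewrite inE big_cons => /orP[/eqP <-|j_r]; first by rewrite Pj geq_minl.
by case: (P i); [apply: leq_trans (geq_minr _ _) _|]; apply: IHr.
Qed.

(* No closure hypothesis is needed: a minimum is one of its arguments. *)
Lemma bigminn_ind (I : Type) (r : seq I) (P : pred I) (F : I -> nat)
    x0 (Q : nat -> Prop) :
  Q x0 -> (forall i, P i -> Q (F i)) -> Q (\big[minn/x0]_(i <- r | P i) F i).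
Proof.
by move=> Qx0 QF; apply: big_ind => // x y Qx Qy; rewrite /minn; case: ifP.
Qed.

Lemma leq_ceil_divLR a b x : 0 < b -> (ceil_div a b <= x) = (a <= b * x).
Proof.
move=> b_gt0; rewrite /ceil_div -ltnS ltn_divLR // mulSn mulnC.
by apply/idP/idP; lia.
Qed.

Section Graph.
Variables (T : finType) (e : rel T).

Lemma gamma220_le_weight f : is220 e f -> gamma220 e <= weight f.
Proof. exact: bigminn_le. Qed.

Definition weighted_set (S : {set T}) (k : 'I_3) : {ffun T -> 'I_3} :=
  [ffun v => if v \in S then k else ord0].

Lemma sum_weighted_set (A S : {set T}) k :
  \sum_(u in A) (weighted_set S k u : nat) = #|A :&: S| * k.
Proof.
rewrite (big_setID S) /= [X in _ + X]big1 => [|u]; last first.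
  by rewrite !inE => /andP[/negbTE uS _]; rewrite ffunE uS.
rewrite addn0 -sum_nat_const; apply: eq_bigr => u.
by rewrite !inE => /andP[_ uS]; rewrite ffunE uS.
Qed.

Lemma weight_weighted_set S k : weight (weighted_set S k) = #|S| * k.
Proof.
rewrite -[S in RHS]setTI -sum_weighted_set.
by apply: eq_bigl => v; rewrite inE.
Qed.

Lemma is220_dominating S : dominating e S -> is220 e (weighted_set S (inord 2)).
Proof.
move=> /forallP S_dom; apply/forallP => v; apply/implyP.
rewrite sum_weighted_set ffunE; case: ifP => [_|vS _]; first by rewrite inordK.
have /existsP[u /andP[uS evu]] : [exists u in S, e v u].
  by have := S_dom v; rewrite vS.
have : 0 < #|N e v :&: S| by apply/card_gt0P; exists u; rewrite !inE evu.
by rewrite inordK //; lia.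
Qed.

Lemma is220_double_total S :
  double_total_dominating e S -> is220 e (weighted_set S (inord 1)).
Proof.
move=> /forallP S_dtd; apply/forallP => v; apply/implyP => _.
by rewrite sum_weighted_set inordK // muln1; apply: S_dtd.
Qed.

Lemma gamma220_le_dominating S : dominating e S -> gamma220 e <= 2 * #|S|.
Proof.
move=> /is220_dominating /gamma220_le_weight.
by rewrite weight_weighted_set inordK // mulnC.
Qed.

Lemma gamma220_le_double_total S :
  double_total_dominating e S -> gamma220 e <= #|S|.
Proof.
move=> /is220_double_total /gamma220_le_weight.
by rewrite weight_weighted_set inordK // muln1.
Qed.

Lemma gamma220_le_twice_gamma : gamma220 e <= 2 * gamma e.
Proof.
apply: (@bigminn_ind _ _ _ _ _ (fun m => gamma220 e <= 2 * m)) => [|S].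
  rewrite -cardsT; apply: gamma220_le_dominating.
  by apply/forallP => v; rewrite inE.
exact: gamma220_le_dominating.
Qed.

(* Minimum degree 2 makes [setT] double total dominating, which covers the
   default value |V| taken by [gamma_x2t] when no such set exists. *)
Lemma gamma220_le_gamma_x2t : 2 <= mindeg e -> gamma220 e <= gamma_x2t e.
Proof.
move=> mindeg_ge2.
apply: (@bigminn_ind _ _ _ _ _ (fun m => gamma220 e <= m)) => [|S].
  rewrite -cardsT; apply: gamma220_le_double_total; apply/forallP => v.
  by rewrite setIT (leq_trans mindeg_ge2) // bigminn_le.
exact: gamma220_le_double_total.
Qed.

Lemma is220_closed_nbhd f v :
  is220 e f -> 2 <= f v + \sum_(u in N e v) (f u : nat).
Proof.
move=> /forallP/(_ v)/implyP f220; case: (leqP (f v) 1) => [/f220|fv_gt1].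
  by move/leq_trans; apply; apply: leq_addl.
exact: leq_trans fv_gt1 (leq_addr _ _).
Qed.

Hypothesis e_sym : symmetric e.

Lemma sum_nbhd_deg (F : T -> nat) :
  \sum_v \sum_(u in N e v) F u = \sum_u deg e u * F u.
Proof.
under eq_bigr do rewrite big_mkcond /=.
rewrite exchange_big; apply: eq_bigr => u _.
rewrite -big_mkcond (eq_bigl (mem (N e u))) => [|v]; last by rewrite !inE e_sym.
by rewrite sum_nat_const.
Qed.

Lemma weight220_lower_bound f :
  is220 e f -> 2 * #|T| <= (maxdeg e).+1 * weight f.
Proof.
move=> f220.
have: 2 * #|T| <= \sum_v (f v + \sum_(u in N e v) (f u : nat)).
  rewrite mulnC -sum_nat_const.
  by apply: leq_sum => v _; apply: is220_closed_nbhd.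
move/leq_trans; apply; rewrite big_split /= sum_nbhd_deg mulSn leq_add //.
rewrite /weight big_distrr leq_sum // => u _; rewrite leq_mul //.
exact: (@leq_bigmax _ (deg e)).
Qed.

Lemma ceil_div_le_gamma220 : ceil_div (2 * #|T|) (maxdeg e).+1 <= gamma220 e.
Proof.
pose lower_bound := ceil_div (2 * #|T|) (maxdeg e).+1.
apply: (@bigminn_ind _ _ _ _ _ (fun m => lower_bound <= m)).
  by rewrite leq_ceil_divLR // -mul2n leq_pmull.
by move=> f f220; rewrite leq_ceil_divLR // weight220_lower_bound.
Qed.

End Graph.

Theorem theorem31 (T : finType) (e : rel T) :
  simple_graph e -> no_isolated e ->
  [/\ ceil_div (2 * #|T|) (maxdeg e).+1 <= gamma220 e,
      gamma220 e <= 2 * gamma e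
    & 2 <= mindeg e -> gamma220 e <= gamma_x2t e].
Proof.
move=> [e_sym _] _; split.
- exact: ceil_div_le_gamma220.
- exact: gamma220_le_twice_gamma.
- exact: gamma220_le_gamma_x2t.
Qed.
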